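(* For every $k=1,\dots,t$ and every $j$ with $0\le j<\deg P^{(k)}_2$, $$\bar S_{k,j}(F,G)=(R'_{k-1})^{b_{k,j}}\,r_{k,j}\,\tilde S_{k,j}(F,G).$$
   Context: Let $K$ be a field of characteristic zero; $|M|$ denotes the determinant of a square matrix $M$; $\mathrm{lc}$ and $\deg$ denote leading coefficient and degree. Subresultant matrices. Let $A=a_px^p+\dots+a_0$, $B=b_qx^q+\dots+b_0$ over $K$ regarded with formal degrees $p\ge q>0$. For $0\le j<q$, $N^{(j)}(A,B)$ is the $(p+q-j)\times(p+q-2j)$ matrix whose $c$-th column ($c=1,\dots,q-j$) has $a_p,\dots,a_0$ in rows $c,\dots,c+p$ and zeros elsewhere, and whose $(q-j+c)$-th column ($c=1,\dots,p-j$) has $b_q,\dots,b_0$ in rows $c,\dots,c+q$ and zeros elsewhere. PRS. For nonzero $A,B\in K[x]$, $\deg A>\deg B$, a PRS is $(P_1,\dots,P_l)$, nonzero polynomials, $P_1=A$, $P_2=B$, $\deg P_{i-1}>\deg P_i$, $\alpha_iP_{i-2}=q_{i-1}P_{i-1}+\beta_iP_i$ ($i=3,\dots,l$) with $\alpha_i,\beta_i\in K\setminus\{0\}$, $q_{i-1}\in K[x]$, and $P_l=\gamma\gcd(A,B)$, $0\ne\gamma\in K$. Recursive PRS. $F=f_mx^m+\dots+f_0$, $G=g_nx^n+\dots+g_0\in K[x]$, $f_mg_n\ne0$, $m>n>0$. A complete recursive PRS consists of PRSs $(P^{(k)}_1,\dots,P^{(k)}_{l_k})$, $k=1,\dots,t$,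 $P^{(1)}_1=F$, $P^{(1)}_2=G$, for $k\ge2$ $P^{(k)}_1=P^{(k-1)}_{l_{k-1}}$, $P^{(k)}_2=\frac d{dx}P^{(k)}_1$; $P^{(k)}_{l_k}$ non-constant for $k<t$, $P^{(t)}_{l_t}$ constant. Assume $l_k\ge3$ for $k<t$. Notation: $n^{(k)}_i=\deg P^{(k)}_i$, $j_0=m$, $j_k=n^{(k)}_{l_k}$. Recursive subresultants ($0\le j<n^{(k)}_2$): $\bar N^{(1,j)}=N^{(j)}(F,G)$; for $k\ge2$, with $\bar N=\bar N^{(k-1,j_{k-1})}$ having $C$ columns, $\bar N_U$ = $\bar N$ minus its bottom $j_{k-1}+1$ rows, $\bar N_L$ = its bottom $j_{k-1}+1$ rows, $\bar N'_L$ = the $j_{k-1}\times C$ matrix whose $i$-th row is $(j_{k-1}+1-i)$ times row $i$ of $\bar N_L$, and $b=2j_{k-1}-2j-1$, $e=j_{k-1}-j-1$: $\bar N^{(k,j)}$ has $bC$ columns in $b$ blocks of width $C$, upper part $\mathrm{diag}(\bar N_U,\dots,\bar N_U)$ ($b$ copies), and a lower part of $2j_{k-1}-j-1$ rows in which column block $s$ ($s=1,\dots,e$) holds $\bar N_L$ in lower rows $s,\dots,s+j_{k-1}$ and column block $e+s$ ($s=1,\dots,j_{k-1}-j$) holds $\bar N'_L$ in lower rows $s,\dots,s+j_{k-1}-1$; other entries $0$. If $\bar N^{(k,j)}$ has $D$ columns, $\bar N^{(k,j)}_\tau$ ($\tau=0,\dots,j$) is formed by its top $D-1$ rows and its $(D+j-\tau)$-th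 row, and $\bar S_{k,j}(F,G)=\sum_{\tau=0}^j|\bar N^{(k,j)}_\tau|x^\tau$. Nested subresultants ($0\le j<n^{(k)}_2$): $\tilde N^{(1,j)}=N^{(j)}(F,G)$; for $k\ge2$, $\tilde N^{(k,j)}=N^{(j)}\big(\tilde S_{k-1,j_{k-1}}(F,G),\frac d{dx}\tilde S_{k-1,j_{k-1}}(F,G)\big)$ with formal degrees $j_{k-1}$ and $j_{k-1}-1$. $\tilde N^{(k,j)}_\tau$ is formed by the top $n^{(k)}_1+n^{(k)}_2-2j-1$ rows and the $(n^{(k)}_1+n^{(k)}_2-j-\tau)$-th row of $\tilde N^{(k,j)}$, and $\tilde S_{k,j}(F,G)=\sum_{\tau=0}^j|\tilde N^{(k,j)}_\tau|x^\tau$. Constants. For $k\ge2$: $b_{k,j}=2j_{k-1}-2j-1$, $u_{k,j}=(m+n-2j_1)\{\prod_{l=2}^{k-1}(2j_{l-1}-2j_l-1)\}b_{k,j}$, $r_{k,j}=(-1)^{(u_{k-1}-1)(1+2+\dots+(b_{k,j}-1))}$; $b_{1,j}=r_{1,j}=1$, $u_1=m+n-2j_1$; $b_k=b_{k,j_k}$, $u_k=u_{k,j_k}$, $r_k=r_{k,j_k}$. $R'_0=1$ and $R'_k=(R'_{k-1})^{b_k}r_k$ for $k=1,\dots,t-1$ (so $R'_1=1$). *)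

From HB Require Import structures.
From mathcomp Require Import all_boot all_order all_algebra.
Set Implicit Arguments. Unset Strict Implicit. Unset Printing Implicit Defensive.
Import Order.TTheory GRing.Theory Num.Theory.
Local Open Scope ring_scope.

(* Matrices of varying size are represented by their entry functions
   nat -> nat -> K (0-indexed row, column), together with explicit sizes. *)

Section Defs.
Variable K : fieldType.

(* Entries of N^{(j)}(A,B), formal degrees p >= q; 0-indexed row r, column c.
   Size: (p+q-j) rows, (p+q-2j) columns. *)
Definition sylv_ent (A B : {poly K}) (p q j : nat) (r c : nat) : K :=
  if ((r < p + q - j) && (c < p + q - 2 * j))%N then
    if (c < q - j)%N then
      (if (c <= r <= c + p)%N then A`_(p - (r - c)) else 0)
    else
      let c' := (c - (q - j))%N in
      (if (c' <= r <= c' + q)%N then B`_(q - (r - c')) else 0)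
  else 0.

(* Given a matrix M with D columns, sum_{tau=0}^{j} |M_tau| x^tau, where M_tau
   consists of the top D-1 rows and the (D+j-tau)-th row (1-indexed) of M. *)
Definition subres_of (M : nat -> nat -> K) (D j : nat) : {poly K} :=
  \sum_(tau < j.+1)
     \det (\matrix_(a < D, c < D)
             M (if (a < D.-1)%N then (a : nat) else (D + j - tau).-1)%N c)
     *: 'X^tau.

(* Entries of \bar N^{(k,j)} built from \bar N = \bar N^{(k-1,J)}, J = j_{k-1},
   which has C columns (and C + J rows), entry function M. *)
Definition bar_step (J j C : nat) (M : nat -> nat -> K) (r c : nat) : K :=
  let b := (2 * J - 2 * j - 1)%N in
  let e := (J - j - 1)%N in
  let sb := (c %/ C)%N in
  let lc := (c %% C)%N in
  if ((c < b * C) && (r < b * C.-1 + (2 * J - j - 1)))%N then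
    if (r < b * C.-1)%N then
      (* upper part: diag(N_U, ..., N_U) *)
      (if (r %/ C.-1 == sb)%N then M (r %% C.-1)%N lc else 0)
    else
      let i := (r - b * C.-1)%N in
      if (sb < e)%N then
        (* block sb+1 holds N_L in lower rows sb+1 .. sb+1+J (1-indexed) *)
        (if (sb <= i <= sb + J)%N then M (C.-1 + (i - sb))%N lc else 0)
      else
        let t' := (sb - e)%N in
        (* block e+t'+1 holds N'_L in lower rows t'+1 .. t'+J (1-indexed);
           row l (1-indexed) of N'_L is (J+1-l) times row l of N_L *)
        (if (t' <= i <= t' + J.-1)%N
         then (J - (i - t'))%:R * M (C.-1 + (i - t'))%N lc else 0)
  else 0.

Variables (F G : {poly K}) (m n : nat) (js : nat -> nat).
(* js k = j_k, with js 0 = j_0 = m. Indices k follow the paper (k >= 1). *)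

(* (number of columns, entry function) of \bar N^{(k,j)} *)
Fixpoint barN (k j : nat) : nat * (nat -> nat -> K) :=
  match k with
  | 0 | 1 => ((m + n - 2 * j)%N, sylv_ent F G m n j)
  | k'.+1 =>
      let J := js k' in
      let: (C, M) := barN k' J in
      (((2 * J - 2 * j - 1) * C)%N, bar_step J j C M)
  end.

Definition barS (k j : nat) : {poly K} :=
  let: (D, M) := barN k j in subres_of M D j.

Fixpoint tildeS (k j : nat) : {poly K} :=
  match k with
  | 0 | 1 => subres_of (sylv_ent F G m n j) (m + n - 2 * j) j
  | k'.+1 =>
      let J := js k' in
      let T := tildeS k' J in
      subres_of (sylv_ent T T^`() J J.-1 j) (J + J.-1 - 2 * j) j
  end.

Definition bkj (k j : nat) : nat :=
  if (k <= 1)%N then 1%N else (2 * js k.-1 - 2 * j - 1)%N.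

Definition ukj (k j : nat) : nat :=
  if (k <= 1)%N then (m + n - 2 * js 1)%N
  else ((m + n - 2 * js 1) *
        (\prod_(2 <= l < k) (2 * js l.-1 - 2 * js l - 1)) * bkj k j)%N.
Definition uk (k : nat) : nat := ukj k (js k).

Definition rkj (k j : nat) : K :=
  if (k <= 1)%N then 1
  else (-1) ^+ ((uk k.-1 - 1) * (\sum_(1 <= i < bkj k j) i))%N.

Fixpoint Rp (k : nat) : K :=
  match k with
  | 0 => 1
  | k'.+1 => Rp k' ^+ bkj k (js k) * rkj k (js k)
  end.

End Defs.
Arguments Rp {K} m n js k.
Arguments rkj {K} m n js k j.

Section PRS.
Variable K : fieldType.

(* (P_1, ..., P_l) = s is a PRS for A, B (0-indexed in s). *)
Definition is_PRS (A B : {poly K}) (s : seq {poly K}) : Prop :=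
  [/\ (2 <= size s)%N /\ nth 0 s 0 = A /\ nth 0 s 1 = B,
      all (fun P => P != 0) s,
      (forall i, (i.+1 < size s)%N -> (size (nth (0%R : {poly K}) s i.+1) < size (nth (0%R : {poly K}) s i))%N),
      (forall i, (2 <= i < size s)%N ->
         exists (alpha beta : K) (q : {poly K}),
           [/\ alpha != 0, beta != 0 &
               alpha *: nth 0 s (i - 2) = q * nth 0 s i.-1 + beta *: nth 0 s i])
    & exists gamma : K, gamma != 0 /\ last 0 s = gamma *: gcdp A B].

(* complete recursive PRS (Ps k for k = 1..t), with l_k >= 3 for k < t *)
Definition is_complete_rPRS (F G : {poly K}) (t : nat) (Ps : nat -> seq {poly K}) : Prop :=
  [/\ (1 <= t)%N /\ is_PRS F G (Ps 1%N),
      (forall k, (2 <= k <= t)%N ->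
         is_PRS (last 0 (Ps k.-1)) (last 0 (Ps k.-1))^`() (Ps k)),
      (forall k, (1 <= k < t)%N -> (1 < size (last (0%R : {poly K}) (Ps k)))%N),
      (size (last (0%R : {poly K}) (Ps t)) <= 1)%N
    & (forall k, (1 <= k < t)%N -> (3 <= size (Ps k))%N)].

Definition jseq (m : nat) (Ps : nat -> seq {poly K}) (k : nat) : nat :=
  if k is 0 then m else (size (last 0 (Ps k))).-1.

End PRS.

From HB Require Import structures.
From mathcomp Require Import all_boot all_order all_algebra zify.
Set Implicit Arguments. Unset Strict Implicit. Unset Printing Implicit Defensive.
Import GRing.Theory.
Local Open Scope ring_scope.

(* The recursive subresultant matrix \bar N^{(k,j)} consists of b = 2J-2j-1
   diagonal copies of the upper part of \bar N^{(k-1,J)}, J = j_{k-1}, on top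
   of a band of (weighted) copies of its last J+1 rows.  The proof is by
   induction on k and rests on two determinant computations:
   - det_stacked_blocks, a block Laplace expansion: a determinant whose upper
     part is diag(U, ..., U) with b blocks of size c x (c+1) equals
     (-1)^(c(0+1+...+(b-1))) times the b x b determinant of the (c+1)-minors
     of U bordered by one lower row restricted to one block;
   - bar_step_bordered_minor: by the induction hypothesis, read on the
     coefficients of \bar S_{k-1,J}, these bordered minors are R'_{k-1} times
     the entries of the Sylvester matrix of \tilde S_{k-1,J} and its
     derivative, since both matrices follow the same band pattern.
   Together they give subres_bar_step, i.e. the identity one level up with
   constant (R'_{k-1})^b r_{k,j}.  The PRS hypotheses only provide the degree
   bounds: j < J - 1 at each stage (in characteristic zero the derivative
   lowers the degree by one), and \bar N^{(k,J)} has u_k > 0 columns. *)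

Lemma bump0 k : bump 0 k = k.+1.
Proof. by rewrite /bump leq0n. Qed.

Section Determinants.
Variable R : comPzRingType.

Definition detn (n : nat) (f : nat -> nat -> R) : R :=
  \det (\matrix_(a < n, x < n) f a x).

Lemma detn_ext n f g :
  (forall a x, (a < n)%N -> (x < n)%N -> f a x = g a x) -> detn n f = detn n g.
Proof.
by move=> fg; congr (\det _); apply/matrixP => a x; rewrite !mxE fg.
Qed.

Lemma detn0 f : detn 0 f = 1.
Proof. by rewrite /detn det_mx00. Qed.

Lemma detn1 f : detn 1 f = f 0%N 0%N.
Proof. by rewrite /detn det_mx11 mxE. Qed.

Lemma detn_expand_row n f r0 : (r0 < n.+1)%N ->
  detn n.+1 f = \sum_(x < n.+1) (-1) ^+ (r0 + x) * f r0 x *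
     detn n (fun a y => f (bump r0 a) (bump x y)).
Proof.
move=> lt_r0; rewrite /detn (expand_det_row _ (Ordinal lt_r0)).
apply: eq_bigr => x _; rewrite mxE /cofactor /= mulrCA mulrA [_ * f _ _]mulrC.
by congr (_ * \det _); apply/matrixP => a y; rewrite !mxE.
Qed.

Lemma detn_expand_col n f x0 : (x0 < n.+1)%N ->
  detn n.+1 f = \sum_(r < n.+1) (-1) ^+ (r + x0) * f r x0 *
     detn n (fun a y => f (bump r a) (bump x0 y)).
Proof.
move=> lt_x0; rewrite /detn (expand_det_col _ (Ordinal lt_x0)).
apply: eq_bigr => r _; rewrite mxE /cofactor /= mulrCA mulrA [_ * f _ _]mulrC.
by congr (_ * \det _); apply/matrixP => a y; rewrite !mxE.
Qed.

Lemma detn_zero_row n f r0 :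
  (r0 < n)%N -> (forall x, (x < n)%N -> f r0 x = 0) -> detn n f = 0.
Proof.
case: n => [//|n] lt_r0 f0; rewrite (detn_expand_row _ lt_r0) big1 // => x _.
by rewrite f0 // mulr0 mul0r.
Qed.

Lemma detn_scale_row n f r0 (s : R) : (r0 < n)%N ->
  detn n (fun a x => if a == r0 then s * f a x else f a x) = s * detn n f.
Proof.
case: n => [//|n] lt_r0; rewrite !(detn_expand_row _ lt_r0) mulr_sumr.
apply: eq_bigr => x _; rewrite eqxx mulrCA !mulrA; congr (_ * _ * _).
by apply: detn_ext => a y _ _; rewrite eq_sym (negbTE (neq_bump _ _)).
Qed.

Lemma detn_scale n f (s : R) : detn n (fun a x => s * f a x) = s ^+ n * detn n f.
Proof. by rewrite /detn -detZ; congr (\det _); apply/matrixP => a x; rewrite !mxE. Qed.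

(* Generalized Laplace expansion along the first c+1 columns, when the first
   c rows vanish beyond column c: the (c+1)-minor is completed by one of the
   last N+1 rows, c+i, and multiplied by its complementary minor. *)
Lemma detn_expand_first_cols c N f :
  (forall r x, (r < c)%N -> (c < x)%N -> f r x = 0) ->
  detn (c + N).+1 f = \sum_(i < N.+1) (-1) ^+ i *
     detn c.+1 (fun a x => f (if (a < c)%N then a else c + i)%N x) *
     detn N (fun a y => f (c + bump i a)%N (c.+1 + y)%N).
Proof.
elim: c f => [|c IH] f f0.
  rewrite add0n (detn_expand_col _ (ltn0Sn N)); apply: eq_bigr => i _.
  by rewrite addn0 detn1.
rewrite addSn (detn_expand_row _ (ltn0Sn _)).
have le_c : (c.+2 <= (c + N).+2)%N by rewrite !ltnS leq_addr.
pose T (x : nat) := (-1) ^+ (0 + x) * f 0%N x *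
   detn (c + N).+1 (fun a y => f (bump 0 a) (bump x y)).
have first_cols : \sum_(x < (c + N).+2) T x = \sum_(x < c.+2) T x.
  rewrite (big_ord_widen _ T le_c) [RHS]big_mkcond /=; apply: eq_bigr => x _.
  by case: ltnP => // le_x; rewrite /T f0 ?mulr0 ?mul0r.
rewrite first_cols {first_cols}/T.
have expand_minor (x : 'I_c.+2) :
  detn (c + N).+1 (fun a y => f (bump 0 a) (bump x y)) =
  \sum_(i < N.+1) (-1) ^+ i *
     detn c.+1 (fun a y => f (bump 0 (if (a < c)%N then a else c + i)%N) (bump x y)) *
     detn N (fun a y => f (c.+1 + bump i a)%N (c.+2 + y)%N).
  rewrite IH => [|r y lt_r lt_y]; last first.
    by apply: f0; have := ltn_ord x; rewrite /bump; case: leqP; lia.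
  apply: eq_bigr => i _; congr (_ * _ * _); apply: detn_ext => a y _ _.
  by rewrite /bump; case: x => x /= lt_x; congr f; lia.
under eq_bigr => x _ do rewrite expand_minor mulr_sumr.
rewrite exchange_big /=; apply: eq_bigr => i _.
have reorder (p q u v w : R) : p * q * (u * v * w) = u * (p * q * v) * w.
  by rewrite !mulrA [p * q * u]mulrC !mulrA.
under eq_bigr => x _ do rewrite reorder.
rewrite -mulr_suml -mulr_sumr [detn c.+2 _](detn_expand_row _ (ltn0Sn _)).
congr (_ * _ * _); apply: eq_bigr => x _; congr (_ * _).
by apply: detn_ext => a y _ _; rewrite !bump0 ltnS; case: ltnP.
Qed.

(* The square matrix whose first b*c rows are diag(U, ..., U), b copies of a
   c x (c+1) block U, and whose last b rows are given by L. *)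
Definition stacked_blocks (b c : nat) (U L : nat -> nat -> R) (r x : nat) : R :=
  if (r < b * c)%N then
    (if (r %/ c == x %/ c.+1)%N then U (r %% c)%N (x %% c.+1)%N else 0)
  else L (r - b * c)%N x.

Definition bordered_minor (c : nat) (U L : nat -> nat -> R) (i s : nat) : R :=
  detn c.+1 (fun a x => if (a < c)%N then U a x else L i (s * c.+1 + x)%N).

(* Block Laplace expansion: expanding successively along the column blocks,
   the determinant of a stacked block matrix is, up to a sign, the b x b
   determinant of its bordered minors. *)
Lemma det_stacked_blocks b c U L :
  detn (b * c.+1) (stacked_blocks b c U L) =
  (-1) ^+ (c * \sum_(i < b) i) * detn b (bordered_minor c U L).
Proof.
elim: b L => [|b IH] L; first by rewrite mul0n !detn0 big_ord0 muln0 expr0 mulr1.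
have divS d k : (0 < d)%N -> ((d + k) %/ d = (k %/ d).+1)%N.
  by move=> d_gt0; rewrite -{1}(mul1n d) divnMDl.
have -> : (b.+1 * c.+1 = (c + b * c.+1).+1)%N by rewrite mulSn addSn.
rewrite detn_expand_first_cols => [|r x lt_r lt_x]; last first.
  rewrite /stacked_blocks (leq_trans lt_r) ?mulSn ?leq_addr // divn_small //.
  by rewrite ifF //; apply/negbTE; rewrite eq_sym -lt0n divn_gt0.
(* Only the bordering rows c+i with i >= b*c give a nonzero (c+1)-minor. *)
have -> : ((b * c.+1).+1 = b * c + b.+1)%N by rewrite mulnS addnC addnS.
rewrite big_split_ord /= big1 ?add0r => [|i _]; last first.
  have /andP[_ c_gt0] : (0 < b)%N && (0 < c)%N.
    by rewrite -muln_gt0 (leq_ltn_trans _ (ltn_ord i)).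
  rewrite (@detn_zero_row _ _ c) ?mulr0 ?mul0r // => x lt_x.
  rewrite ltnn /stacked_blocks mulSn ltn_add2l ltn_ord (divn_small lt_x).
  by rewrite divS.
rewrite [detn b.+1 _](detn_expand_col _ (ltn0Sn b)) mulr_sumr.
apply: eq_bigr => i _.
have first_minor :
    detn c.+1 (fun a x => stacked_blocks b.+1 c U L
                            (if (a < c)%N then a else c + (b * c + i))%N x)
    = bordered_minor c U L i 0.
  apply: detn_ext => a x lt_a lt_x; rewrite /stacked_blocks.
  case: (ltnP a c) => lt_ac.
    rewrite (leq_trans lt_ac) ?mulSn ?leq_addr //.
    by rewrite !divn_small // eqxx !modn_small.
  rewrite ifF; last by apply/negbTE; rewrite -leqNgt mulSn addnA leq_addr.
  by rewrite mul0n add0n mulSn addnA addKn.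
pose L' r y := L (bump i r) (c.+1 + y)%N.
have complement_minor :
    detn (b * c.+1) (fun a y => stacked_blocks b.+1 c U L
                                  (c + bump (b * c + i) a) (c.+1 + y)%N)
    = detn (b * c.+1) (stacked_blocks b c U L').
  apply: detn_ext => a y lt_a lt_y; rewrite /stacked_blocks /L'.
  case: (ltnP a (b * c)) => lt_ab.
    have /andP[_ c_gt0] : (0 < b)%N && (0 < c)%N.
      by rewrite -muln_gt0 (leq_ltn_trans _ lt_ab).
    have -> : bump (b * c + i) a = a by rewrite /bump leqNgt (leq_trans lt_ab) ?leq_addr.
    by rewrite mulSn ltn_add2l lt_ab !divS // eqSS !modnDl.
  rewrite ifF; last first.
    by apply/negbTE; rewrite -leqNgt mulSn leq_add2l /bump; lia.
  by congr (L _ _); rewrite /bump mulSn subnDl; case: leqP => ?; case: leqP; lia.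
have shifted_minors :
    detn b (bordered_minor c U L') =
    detn b (fun a y => bordered_minor c U L (bump i a) (bump 0 y)).
  apply: detn_ext => a s _ _; apply: detn_ext => a' x _ _.
  by case: ifP => // _; rewrite /L' bump0 mulSn addnA.
rewrite first_minor complement_minor IH big_ord_recr /= shifted_minors addn0.
rewrite mulnDr !exprD [(c * b)%N]mulnC.
have reorder (p q u v w : R) : p * q * v * (u * w) = u * p * (q * v * w).
  by rewrite mulrCA !mulrA.
exact: reorder.
Qed.
End Determinants.

Section SubresultantStep.
Variable K : fieldType.

Lemma subres_of_detn (M : nat -> nat -> K) D j : subres_of M D j =
  \sum_(tau < j.+1)
    detn D (fun a x => M (if (a < D.-1)%N then a else (D + j - tau).-1)%N x) *: 'X^tau.
Proof. by []. Qed.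

Lemma coef_subres (M : nat -> nat -> K) D j l : (l <= j)%N ->
  (subres_of M D j)`_l =
  detn D (fun a x => M (if (a < D.-1)%N then a else (D + j - l).-1)%N x).
Proof.
move=> le_lj; rewrite subres_of_detn coef_sumMXn.
rewrite (bigD1 (Ordinal (leq_ltn_trans le_lj (ltnSn j)))) //=.
by rewrite big1 ?addr0 // => i /andP[/eqP il /eqP ne]; case: ne; apply: ord_inj.
Qed.

Lemma size_deriv_pchar0 (p : {poly K}) :
  [pchar K] =i pred0 -> size p^`() = (size p).-1.
Proof.
move=> pchar0; have [le_p1|lt_1p] := leqP (size p) 1.
  by rewrite [p]size1_polyC // derivC size_poly0 size_polyC; case: eqP.
have p_nz : p != 0 by rewrite -size_poly_gt0 ltnW.
have [d size_p] : exists d, size p = d.+2 by exists (size p).-2; lia.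
rewrite size_p /=; apply/eqP; rewrite eqn_leq -ltnS -size_p lt_size_deriv //=.
rewrite ltnNge; apply/negP => /(nth_default 0) /eqP.
rewrite coef_deriv -mulr_natr mulf_eq0 (pcharf0P K).1 // orbF; apply/negP.
have -> : d.+1 = (size p).-1 by rewrite size_p.
by rewrite -lead_coefE lead_coef_eq0.
Qed.

(* The band pattern shared by the lower part of \bar N^{(k,j)} and by the
   Sylvester matrix of (T, T'), where T has degree J: column s < e carries
   A 0, ..., A J downwards from row s, and column e + t carries the weighted
   entries J * A 0, ..., 1 * A (J-1) downwards from row t. *)
Definition band (J e : nat) (A : nat -> K) (r s : nat) : K :=
  if (s < e)%N then (if (s <= r <= s + J)%N then A (r - s)%N else 0)
  else let t := (s - e)%N in
       if (t <= r <= t + J.-1)%N then (J - (r - t))%:R * A (r - t)%N else 0.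

Lemma band_single_term J e r s :
  exists2 l, (l <= J)%N & exists w : K, forall A, band J e A r s = w * A l.
Proof.
rewrite /band; case: (s < e)%N; [case: (boolP (s <= r <= s + J)%N) |
  case: (boolP (s - e <= r <= s - e + J.-1)%N)].
- by move=> /andP[? ?]; exists (r - s)%N; [lia | exists 1 => A; rewrite mul1r].
- by exists 0%N => //; exists 0 => A; rewrite mul0r.
- move=> /andP[? ?]; exists (r - (s - e))%N; first lia.
  by exists (J - (r - (s - e)))%:R.
- by exists 0%N => //; exists 0 => A; rewrite mul0r.
Qed.

Lemma sylv_ent_deriv (T : {poly K}) J j r s :
  (j.+1 < J)%N -> (r < 2 * J - j - 1)%N -> (s < 2 * J - 2 * j - 1)%N ->
  sylv_ent T T^`() J J.-1 j r s = band J (J - j - 1) (fun l => T`_(J - l)) r s.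
Proof.
move=> lt_jJ lt_r lt_s; rewrite /sylv_ent /band.
have -> : (r < J + J.-1 - j)%N by lia.
have -> : (s < J + J.-1 - 2 * j)%N by lia.
have -> : (J.-1 - j = J - j - 1)%N by lia.
rewrite /=; case: ifP => // _; case: ifP => // /andP[le_tr le_rt].
by rewrite coef_deriv mulr_natl; congr (_`_ _ *+ _); lia.
Qed.

Lemma bar_step_lower_entry J j c M r s x :
  (x < c.+1)%N -> (r < 2 * J - j - 1)%N -> (s < 2 * J - 2 * j - 1)%N ->
  bar_step J j c.+1 M ((2 * J - 2 * j - 1) * c + r)%N (s * c.+1 + x)%N =
  band J (J - j - 1) (fun l => M (c + l)%N x) r s.
Proof.
move=> lt_x lt_r lt_s; rewrite /bar_step /band /=.
have -> : ((s * c.+1 + x) %/ c.+1 = s)%N by rewrite divnMDl // divn_small // addn0.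
have -> : ((s * c.+1 + x) %% c.+1 = x)%N by rewrite modnMDl modn_small.
have -> : (s * c.+1 + x < (2 * J - 2 * j - 1) * c.+1)%N.
  apply: (@leq_trans (s.+1 * c.+1)); first by rewrite mulSn addnC ltn_add2r.
  by rewrite leq_mul2r lt_s orbT.
by rewrite ltn_add2l lt_r /= ltnNge leq_addr /= addKn.
Qed.

(* The bordered minors of \bar N^{(k,j)}: if the minors of \bar N^{(k-1,J)}
   bordered by its rows c + l are lam times the coefficients of T (this is
   the induction hypothesis), then each bordered minor of the next matrix is
   lam times an entry of the Sylvester matrix of T and T'. *)
Lemma bar_step_bordered_minor J j c M (T : {poly K}) lam r s :
  (j.+1 < J)%N ->
  (forall l, (l <= J)%N ->
     detn c.+1 (fun a x => M (if (a < c)%N then a else c + l)%N x) = lam * T`_(J - l)) ->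
  (r < 2 * J - j - 1)%N -> (s < 2 * J - 2 * j - 1)%N ->
  bordered_minor c M
    (fun i x => bar_step J j c.+1 M ((2 * J - 2 * j - 1) * c + i)%N x) r s =
  lam * sylv_ent T T^`() J J.-1 j r s.
Proof.
move=> lt_jJ minorsM lt_r lt_s.
have [l le_lJ [w bandE]] := band_single_term J (J - j - 1) r s.
rewrite sylv_ent_deriv // bandE mulrCA -minorsM // -(detn_scale_row _ _ (ltnSn c)).
apply: detn_ext => a x lt_a lt_x; rewrite bar_step_lower_entry // bandE.
have [lt_ac|->] : (a < c)%N \/ a = c by lia.
- by rewrite lt_ac ltn_eqF.
- by rewrite ltnn eqxx.
Qed.

Lemma subres_bar_step J j c M (T : {poly K}) lam :
  (j.+1 < J)%N ->
  (forall l, (l <= J)%N ->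
     detn c.+1 (fun a x => M (if (a < c)%N then a else c + l)%N x) = lam * T`_(J - l)) ->
  subres_of (bar_step J j c.+1 M) ((2 * J - 2 * j - 1) * c.+1) j =
  ((-1) ^+ (c * \sum_(i < 2 * J - 2 * j - 1) i) * lam ^+ (2 * J - 2 * j - 1)) *:
     subres_of (sylv_ent T T^`() J J.-1 j) (J + J.-1 - 2 * j) j.
Proof.
move=> lt_jJ minorsM; rewrite !subres_of_detn scaler_sumr; apply: eq_bigr => tau _.
rewrite scalerA; congr (_ *: _).
set b := (2 * J - 2 * j - 1)%N.
have -> : (J + J.-1 - 2 * j = b)%N by rewrite /b; lia.
pose row i := if (i < b.-1)%N then i else (b + j - tau).-1.
pose L i x := bar_step J j c.+1 M (b * c + row i)%N x.
have -> : detn (b * c.+1) (fun a x => bar_step J j c.+1 M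
              (if (a < (b * c.+1).-1)%N then a else (b * c.+1 + j - tau).-1) x)
          = detn (b * c.+1) (stacked_blocks b c M L).
  apply: detn_ext => a x lt_a lt_x; rewrite /stacked_blocks /L /row.
  have mulbS : (b * c.+1 = b * c + b)%N by rewrite mulnS addnC.
  have := ltn_ord tau; rewrite mulbS in lt_a *.
  case: (ltnP a (b * c)) => lt_ab lt_tau; last by congr bar_step; do 2 case: ifP; lia.
  rewrite ifT; last by lia.
  by rewrite /bar_step /= lt_x /= ifT ?lt_ab; last lia.
rewrite det_stacked_blocks.
rewrite (@detn_ext _ _ _ (fun i s => lam * sylv_ent T T^`() J J.-1 j (row i) s)).
  by rewrite detn_scale mulrA.
move=> i s lt_i lt_s; apply: bar_step_bordered_minor => //; rewrite /row; case: ifP; lia.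
Qed.
End SubresultantStep.

Lemma sum_ord_from1 b : (\sum_(i < b) i = \sum_(1 <= i < b) i)%N.
Proof.
case: b => [|b]; first by rewrite big_ord0 big_geq.
by rewrite -(big_mkord xpredT (fun i => i)) big_ltn.
Qed.

Section RecursiveMatrices.
Variables (K : fieldType) (F G : {poly K}) (m n : nat) (js : nat -> nat).

Lemma barN_SS k j : barN F G m n js k.+2 j =
  (((2 * js k.+1 - 2 * j - 1) * (barN F G m n js k.+1 (js k.+1)).1)%N,
   bar_step (js k.+1) j (barN F G m n js k.+1 (js k.+1)).1
                        (barN F G m n js k.+1 (js k.+1)).2).
Proof.
have -> : barN F G m n js k.+2 j =
  let: (C, M) := barN F G m n js k.+1 (js k.+1) in
  (((2 * js k.+1 - 2 * j - 1) * C)%N, bar_step (js k.+1) j C M) by [].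
by case: (barN F G m n js k.+1 (js k.+1)).
Qed.

Lemma barS_subres k j :
  barS F G m n js k j = subres_of (barN F G m n js k j).2 (barN F G m n js k j).1 j.
Proof. by rewrite /barS; case: (barN F G m n js k j). Qed.

Lemma barN_cols k j : (barN F G m n js k.+2 j).1 = ukj m n js k.+2 j.
Proof.
elim: k j => [|k IH] j; first by rewrite barN_SS /ukj /= big_geq // muln1 mulnC.
rewrite barN_SS /= IH /ukj /= (@big_nat_recr _ _ _ k.+2) //= /bkj /=.
by rewrite [RHS]mulnC !mulnA.
Qed.

Lemma uk_barN k : uk m n js k.+1 = (barN F G m n js k.+1 (js k.+1)).1.
Proof. by case: k => [|k]; rewrite /uk ?barN_cols. Qed.
End RecursiveMatrices.

Lemma last_lt_second (T : Type) (x0 : T) (f : T -> nat) (s : seq T) :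
  (forall i, (i.+1 < size s)%N -> (f (nth x0 s i.+1) < f (nth x0 s i))%N) ->
  (3 <= size s)%N -> (f (last x0 s) < f (nth x0 s 1))%N.
Proof.
move=> decr size_s; rewrite -nth_last.
have lt_second d : (d.+2 < size s)%N -> (f (nth x0 s d.+2) < f (nth x0 s 1))%N.
  elim: d => [|d IH] lt_d; first exact: decr.
  by apply: ltn_trans (IH (ltnW lt_d)); apply: decr.
have -> : (size s).-1 = (size s - 3).+2 by lia.
by apply: lt_second; lia.
Qed.

Section CompleteRecursivePRS.
Variables (K : fieldType) (F G : {poly K}) (m n t : nat) (Ps : nat -> seq {poly K}).
Hypothesis pchar0 : [pchar K] =i pred0.
Hypothesis size_G : size G = n.+1.
Hypothesis lt_nm : (n < m)%N.
Hypothesis rPRS : is_complete_rPRS F G t Ps.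

Local Notation js := (jseq m Ps).
Local Notation deg2 k := (size (Ps k)`_1).-1.

Lemma rPRS_stage_PRS k : (1 <= k <= t)%N -> exists A B, is_PRS A B (Ps k).
Proof.
case: rPRS => [[_ PRS1] PRSk _ _ _] /andP[].
by case: k => [//|[|k]] _ le_kt; [exists F, G | do 2 eexists; apply: PRSk].
Qed.

Lemma deg2_first : deg2 1 = n.
Proof. by case: rPRS => [[_ [[_ [_ ->]] _ _ _ _]]] _ _ _ _; rewrite size_G. Qed.

(* deg P^{(k)}_2 = j_{k-1} - 1 for k >= 2, as P^{(k)}_2 is a derivative. *)
Lemma deg2_rec k : (2 <= k <= t)%N -> deg2 k = (js k.-1).-1.
Proof.
move=> le_2kt; case: rPRS => _ PRSk _ _ _.
case: (PRSk _ le_2kt) => [[_ [_ ->]]] _ _ _ _.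
by rewrite size_deriv_pchar0 //; case: k le_2kt => [|[|k]].
Qed.

(* j_k < deg P^{(k)}_2 before the last stage, since l_k >= 3. *)
Lemma js_lt_deg2 k : (1 <= k < t)%N -> (js k < deg2 k)%N.
Proof.
move=> /andP[le_1k lt_kt]; have [A [B [_ _ decr _ _]]] : exists A B, is_PRS A B (Ps k).
  by apply: rPRS_stage_PRS; rewrite le_1k ltnW.
case: rPRS => _ _ nonconst _ long.
have -> : js k = (size (last (0%R : {poly K}) (Ps k))).-1.
  by rewrite /jseq; case: (k) le_1k.
have := last_lt_second (f := fun p : {poly K} => size p) decr (long k _).
have := nonconst k; rewrite le_1k lt_kt => /(_ isT) lt_1l /(_ isT) lt_l2.
by rewrite ltn_predRL (ltn_predK lt_1l).
Qed.

Lemma barN_cols_gt0 k : (1 <= k < t)%N -> (0 < (barN F G m n js k (js k)).1)%N.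
Proof.
elim: k => [//|[|k] IH] /andP[_ lt_kt].
  by have := @js_lt_deg2 1 lt_kt; rewrite deg2_first /=; lia.
rewrite barN_SS /= muln_gt0 IH ?(ltn_trans _ lt_kt) //=.
by have := @js_lt_deg2 k.+2 lt_kt; rewrite deg2_rec /=; lia.
Qed.

Lemma barS_step k j : (k.+2 <= t)%N -> (j < deg2 k.+2)%N ->
  barS F G m n js k.+1 (js k.+1) = Rp m n js k.+1 *: tildeS F G m n js k.+1 (js k.+1) ->
  barS F G m n js k.+2 j =
    (Rp m n js k.+1 ^+ bkj js k.+2 j * rkj m n js k.+2 j) *: tildeS F G m n js k.+2 j.
Proof.
move=> le_k2t lt_j IH.
have lt_jJ : (j.+1 < js k.+1)%N by move: lt_j; rewrite deg2_rec ?le_k2t //=; lia.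
set J := js k.+1 in IH lt_jJ *; set lam := Rp m n js k.+1 in IH *.
have := @barN_cols_gt0 k.+1; rewrite le_k2t => /(_ isT).
have := uk_barN F G m n js k; move: IH.
rewrite !barS_subres barN_SS -/J.
case: (barN F G m n js k.+1 J) => [[|c] M]; cbn [fst snd] => IH uk_C // _.
rewrite (@subres_bar_step _ J j c M (tildeS F G m n js k.+1 J) lam) //; last first.
  move=> l le_lJ; rewrite -coefZ -IH coef_subres ?leq_subr //.
  by apply: detn_ext => a x _ _; congr M; case: ifP; lia.
by congr (_ *: _); rewrite mulrC /rkj /bkj /= uk_C subSS subn0 sum_ord_from1.
Qed.
End CompleteRecursivePRS.

(* Theorem 6: \bar S_{k,j}(F,G) = (R'_{k-1})^{b_{k,j}} r_{k,j} \tilde S_{k,j}(F,G),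
   by induction on k; at stage 1 both sides are the same Sylvester
   subresultant, and barS_step uses the induction hypothesis at j = j_{k-1}. *)
Theorem mainTheorem6 (K : fieldType) (F G : {poly K}) (m n t : nat)
    (Ps : nat -> seq {poly K}) :
  [pchar K] =i pred0 ->
  size F = m.+1 -> size G = n.+1 -> (0 < n)%N -> (n < m)%N ->
  is_complete_rPRS F G t Ps ->
  forall k j : nat, (1 <= k <= t)%N ->
  (j < (size (nth (0%R : {poly K}) (Ps k) 1)).-1)%N ->
  barS F G m n (jseq m Ps) k j =
    (Rp m n (jseq m Ps) k.-1 ^+ bkj (jseq m Ps) k j * rkj m n (jseq m Ps) k j)
      *: tildeS F G m n (jseq m Ps) k j.
Proof.
move=> pchar0 _ size_G _ lt_nm rPRS k j /andP[le_1k le_kt].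
elim: k le_1k le_kt j => [//|[|k] IH] _ le_kt j lt_j.
  by rewrite /bkj /rkj /= expr1 mulr1 scale1r.
apply: (barS_step pchar0 size_G lt_nm rPRS) => //.
by apply: IH => //; [exact: ltnW | apply: (js_lt_deg2 _ rPRS)].
Qed.
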